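(* Suppose $\Phi\ge6H^2\log(12|\mathcal S|^2|\mathcal A|/\delta)$ and $H\ge2$. On the event $\mathcal E^P$, for every $(s,a,s')\in\mathcal S\times\mathcal A\times\mathcal S$, $$\Big(1-\frac1H\Big)\widehat{\mathbb P}^\dagger(s'\mid s,a)\le\mathbb P^\dagger(s'\mid s,a)\le\Big(1+\frac1H\Big)\widehat{\mathbb P}^\dagger(s'\mid s,a).$$
   Context: Finite state space $\mathcal S$, finite action space $\mathcal A$, transition kernel $\mathbb P(\cdot\mid s,a)$ on $\mathcal S$, $\delta\in(0,1)$. An offline dataset of tuples $(s,a,s')$ with $s'\sim\mathbb P(\cdot\mid s,a)$ gives counts $N(s,a)$, $N(s,a,s')$. With an absorbing state $s^\dagger\notin\mathcal S$: $\mathbb P^\dagger(s'\mid s,a)=\mathbb P(s'\mid s,a)$ if $N(s,a,s')\ge\Phi$ and $0$ otherwise; $\widehat{\mathbb P}^\dagger(s'\mid s,a)=N(s,a,s')/N(s,a)$ if $N(s,a,s')\ge\Phi$ and $0$ otherwise (for $s'\in\mathcal S$). $\mathcal E^P$ is the event that for all $(s,a,s')$ with $N(s,a,s')\ge\Phi$, $|\widehat{\mathbb P}^\dagger(s'\mid s,a)-\mathbb P^\dagger(s'\mid s,a)|\le\sqrt{\frac{2\widehat{\mathbb P}^\dagger(s'\mid s,a)}{N(s,a)}\log\frac{12|\mathcal S|^2|\mathcal A|}{\delta}}+\frac{14}{3N(s,a)}\log\frac{12|\mathcal S|^2|\mathcal A|}{\delta}$. *)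

From HB Require Import structures.
From mathcomp Require Import all_boot all_order all_algebra.
From mathcomp Require Import reals exp.
Set Implicit Arguments. Unset Strict Implicit. Unset Printing Implicit Defensive.
Import Order.TTheory GRing.Theory Num.Theory.
Local Open Scope ring_scope.

Section Offline.
Variables (R : realType) (S A : finType).

Definition is_kernel (P : S -> A -> S -> R) : Prop :=
  forall s a, (forall s', 0 <= P s a s') /\ \sum_(s' : S) P s a s' = 1.

Definition N3 (D : seq (S * A * S)) (s : S) (a : A) (s' : S) : nat :=
  count (pred1 (s, a, s')) D.
Definition N2 (D : seq (S * A * S)) (s : S) (a : A) : nat :=
  count (fun t : S * A * S => (t.1.1 == s) && (t.1.2 == a)) D.

(* P^dagger restricted to S (mass on the absorbing state s^dagger is
   not needed for the statement) *)
Definition Pdag (P : S -> A -> S -> R) (Phi : R) D s a s' : R :=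
  if Phi <= (N3 D s a s')%:R then P s a s' else 0.
Definition Phat (Phi : R) D s a s' : R :=
  if Phi <= (N3 D s a s')%:R then (N3 D s a s')%:R / (N2 D s a)%:R else 0.

Definition logterm (delta : R) : R :=
  ln (12 * (#|S| ^ 2 * #|A|)%:R / delta).

Definition event_EP (P : S -> A -> S -> R) (Phi delta : R) D : Prop :=
  forall s a s', Phi <= (N3 D s a s')%:R ->
    `| Phat Phi D s a s' - Pdag P Phi D s a s' |
      <= Num.sqrt (2 * Phat Phi D s a s' / (N2 D s a)%:R * logterm delta)
         + 14 / (3 * (N2 D s a)%:R) * logterm delta.

End Offline.

From HB Require Import structures.
From mathcomp Require Import all_boot all_order all_algebra.
From mathcomp Require Import reals exp.
From mathcomp Require Import ring lra.
Set Implicit Arguments. Unset Strict Implicit. Unset Printing Implicit Defensive.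
Import Order.TTheory GRing.Theory Num.Theory.
Local Open Scope ring_scope.

(* Once [N(s,a,s') >= Phi >= 6 H^2 L], the ratio [L / N(s,a)] is at most
   [Phat / (6 H^2)], so both terms of the Bernstein width of the event E^P are
   small multiples of [Phat / H]: the square-root term is at most
   [Phat / (H sqrt 3) <= 3/5 Phat / H] and the linear one at most
   [7/18 Phat / H], and [3/5 + 7/18 < 1]. *)

Lemma N3_le_N2 (S A : finType) (D : seq (S * A * S)) (s : S) (a : A) (s' : S) :
  (N3 D s a s' <= N2 D s a)%N.
Proof. by apply: sub_count => -[[x y] z] /eqP [-> -> _] /=; rewrite !eqxx. Qed.

Lemma logterm_gt0 (R : realType) (S A : finType) (delta : R) :
  (0 < #|S|)%N -> (0 < #|A|)%N -> 0 < delta < 12 -> 0 < logterm S A delta.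
Proof.
move=> S0 A0 /andP[d0 d12]; apply: ln_gt0.
rewrite ltr_pdivlMr // mul1r.
have : (1 : R) <= (#|S| ^ 2 * #|A|)%:R.
  by rewrite (ler_nat R 1) muln_gt0 expn_gt0 S0 A0.
lra.
Qed.

Lemma sqrtr_le (R : rcfType) (x y : R) : 0 <= y -> x <= y ^+ 2 -> Num.sqrt x <= y.
Proof.
by move=> y0 xy; rewrite -(ger0_norm y0) -sqrtr_sqr ler_sqrt // sqr_ge0.
Qed.

Lemma bernstein_width_le (R : rcfType) (h N L phat : R) :
  2 <= h -> 0 < N -> 0 <= L -> 6 * h ^+ 2 * L <= phat * N ->
  Num.sqrt (2 * phat / N * L) + 14 / (3 * N) * L <= phat / h.
Proof.
move=> h2 N0 L0 hL.
have h0 : 0 < h by lra.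
set w := L / N; set t := phat / h.
have w0 : 0 <= w by rewrite divr_ge0 // ltW.
have phatE : phat = h * t by rewrite /t mulrC divfK ?gt_eqF.
have hw : 6 * h * w <= t.
  rewrite -(ler_pM2l h0) -phatE (_ : h * _ = 6 * h ^+ 2 * w); last by ring.
  by rewrite /w mulrA ler_pdivrMr.
have t0 : 0 <= t by have := mulr_ge0 (ltW h0) w0; lra.
have sqrt_term : Num.sqrt (2 * phat / N * L) <= 3 / 5 * t.
  apply: sqrtr_le; first lra.
  have -> : 2 * phat / N * L = 2 * h * t * w by rewrite phatE /w; ring.
  have := ler_wpM2r t0 hw; nra.
have -> : 14 / (3 * N) * L = 14 / 3 * w by rewrite /w; field; rewrite gt_eqF.
have : 0 <= (h - 2) * w by apply: mulr_ge0 => //; lra.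
nra.
Qed.

Theorem lemma16 (R : realType) (S A : finType) (P : S -> A -> S -> R)
  (D : seq (S * A * S)) (Phi delta : R) (H : nat) :
  is_kernel P ->
  0 < delta < 1 ->
  (2 <= H)%N ->
  6 * (H%:R) ^+ 2 * logterm S A delta <= Phi ->
  event_EP P Phi delta D ->
  forall (s : S) (a : A) (s' : S),
    (1 - H%:R^-1) * Phat Phi D s a s' <= Pdag P Phi D s a s' /\
    Pdag P Phi D s a s' <= (1 + H%:R^-1) * Phat Phi D s a s'.
Proof.
move=> _ /andP[d0 d1] H2 hPhi EP s a s'.
have := EP s a s'; rewrite /Pdag /Phat.
case: ifP => [hN /(_ isT)|_ _]; last by rewrite !mulr0 lexx.
set n := (N3 D s a s')%:R; set N := (N2 D s a)%:R; set L := logterm S A delta.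
have h2 : 2 <= (H%:R : R) by rewrite (ler_nat R 2).
have L0 : 0 < L.
  by apply: logterm_gt0; [apply/card_gt0P; exists s | apply/card_gt0P; exists a | lra].
have n0 : 0 < n.
  apply: lt_le_trans hN; apply: lt_le_trans hPhi.
  by apply: mulr_gt0 L0; apply: mulr_gt0 => //; apply: exprn_gt0; lra.
have N0 : 0 < N by apply: lt_le_trans n0 _; rewrite ler_nat N3_le_N2.
have hL : 6 * H%:R ^+ 2 * L <= n / N * N.
  by rewrite divfK ?gt_eqF //; apply: le_trans hN.
move=> /le_trans /(_ (bernstein_width_le h2 N0 (ltW L0) hL)).
rewrite distrC ler_distl => /andP[lo hi].
split; lra.
Qed.
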